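(* Let $a,b\in\mathbb{R}^2\cong\mathbb{C}$ with $\|b-a\|=\sin 1$, put $\alpha_0=b-a$, $c_0=\sin^2 1$, and let $(c_k)_{k\ge0}$ be defined by $\arcsin\sqrt{(c_k-c_{k-1})/c_k}=2^{-k}$ for $k\ge1$ (equivalently $c_k=c_{k-1}/\cos^2(2^{-k})$), so that $(c_k)$ is increasing, $c_k\to1$ and $\sum_k\sqrt{c_k-c_{k-1}}<\infty$. Let $f(t,\omega)=a+\int_0^t\alpha(s,\omega)\,ds$ where $\alpha(t,\omega)=\lim_n\alpha_n(t,\omega)$. Then for each $t\in[0,1]\setminus D$, $\dot f(t,\omega)$ exists for all $\omega$ and the random variable $\omega\mapsto\dot f(t,\omega)$ is uniformly distributed on the arc $C_0=\{z_0e^{i\theta}:-1\le\theta\le1\}$ of the unit circle, where $z_0=(b-a)/\|b-a\|$; that is, for every subarc $C\subseteq C_0$, $P\{\omega:\dot f(t,\omega)\in C\}=\lambda(C)/2$, where $\lambda$ is arc-length (Lebesgue) measure on the unit circle.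
   Context: $D$ denotes the set of dyadic rationals in $[0,1]$. For $k\ge1$ the Rademacher function $r_k:[0,1]\to\{-1,1\}$ is $r_k(t)=(-1)^{\lfloor 2^k t\rfloor}$ for $t<1$ and $r_k(1)=-1$. For $k\ge1$ and $j\in\{1,\dots,2^{k-1}\}$ let $I_{kj}=\left[\frac{j-1}{2^{k-1}},\frac{j}{2^{k-1}}\right)$ if $j<2^{k-1}$ and $I_{k,2^{k-1}}=\left[\frac{2^{k-1}-1}{2^{k-1}},1\right]$; $1_{I_{kj}}$ is its indicator. Let $(\Omega,\mathcal F,P)$ be the product probability space $\Omega=\prod_{k\ge1}\prod_{j=1}^{2^{k-1}}\{-1,1\}$, each factor uniform, with coordinate maps $d_{kj}:\Omega\to\{-1,1\}$. With $\theta_k=\arcsin\sqrt{(c_k-c_{k-1})/c_k}$, put $\Theta_n(t,\omega)=\sum_{k=1}^{n}\sum_{j=1}^{2^{k-1}}r_k(t)1_{I_{kj}}(t)d_{kj}(\omega)\theta_k$ and $\alpha_n(t,\omega)=\sqrt{c_n/c_0}\,\alpha_0\exp(i\Theta_n(t,\omega))$. *)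

From Stdlib Require Import Reals Lra Lia ZArith List.
Open Scope R_scope.

Definition cplx := (R * R)%type.
Definition cadd (z w : cplx) : cplx := (fst z + fst w, snd z + snd w).
Definition csub (z w : cplx) : cplx := (fst z - fst w, snd z - snd w).
Definition cmul (z w : cplx) : cplx :=
  (fst z * fst w - snd z * snd w, fst z * snd w + snd z * fst w).
Definition cscale (r : R) (z : cplx) : cplx := (r * fst z, r * snd z).
Definition cnorm (z : cplx) : R := sqrt (fst z ^ 2 + snd z ^ 2).
Definition cexpi (th : R) : cplx := (cos th, sin th).

Fixpoint rsum1 (n : nat) (f : nat -> R) : R :=
  match n with O => 0 | S m => rsum1 m f + f (S m) end.

Fixpoint cseq (k : nat) : R :=
  match k with
  | O => sin 1 ^ 2
  | S m => cseq m / (cos (/ 2 ^ (S m))) ^ 2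
  end.
Definition theta (k : nat) : R := asin (sqrt ((cseq k - cseq (pred k)) / cseq k)).

Definition dyadic (t : R) : Prop :=
  0 <= t <= 1 /\ exists k m : nat, t = INR m / 2 ^ k.

Definition floorR (x : R) : Z := Int_part x.
Definition rademacher (k : nat) (t : R) : R :=
  if Rlt_dec t 1 then (if Z.even (floorR (2 ^ k * t)) then 1 else -1) else -1.
Definition indI (k j : nat) (t : R) : R :=
  let a := INR (j - 1) / 2 ^ (k - 1) in
  let b := INR j / 2 ^ (k - 1) in
  if Nat.eqb j (2 ^ (k - 1))%nat
  then (if Rle_dec a t then (if Rle_dec t 1 then 1 else 0) else 0)
  else (if Rle_dec a t then (if Rlt_dec t b then 1 else 0) else 0).

(* Omega = product of copies of {-1,1} indexed by pairs (k,j); coordinate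
   (k,j) true means d_{kj} = 1, false means d_{kj} = -1. Coordinates outside
   k >= 1, 1 <= j <= 2^(k-1) are present but unused. *)
Definition Omega := nat -> nat -> bool.
Definition dcoord (k j : nat) (w : Omega) : R := if w k j then 1 else -1.

Definition Theta (n : nat) (t : R) (w : Omega) : R :=
  rsum1 n (fun k => rsum1 (2 ^ (k - 1)) (fun j =>
     rademacher k t * indI k j t * dcoord k j w * theta k)).
Definition alpha_n (alpha0 : cplx) (n : nat) (t : R) (w : Omega) : cplx :=
  cscale (sqrt (cseq n / cseq 0)) (cmul alpha0 (cexpi (Theta n t w))).

Definition cyl := list ((nat * nat) * bool).
Definition cyl_mem (c : cyl) (w : Omega) : Prop :=
  Forall (fun p => w (fst (fst p)) (snd (fst p)) = snd p) c.
Definition cyl_meas (c : cyl) : R := (/ 2) ^ length c.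

Definition cover_sum (A : Omega -> Prop) (s : R) : Prop :=
  exists cs : nat -> option cyl,
    (forall n c, cs n = Some c -> NoDup (map fst c)) /\
    (forall w, A w -> exists n c, cs n = Some c /\ cyl_mem c w) /\
    infinite_sum (fun n => match cs n with Some c => cyl_meas c | None => 0 end) s.

Definition outer_prob (A : Omega -> Prop) (x : R) : Prop :=
  (forall s, cover_sum A s -> x <= s) /\
  (forall y, (forall s, cover_sum A s -> y <= s) -> y <= x).

(* P(A) = x : A is measurable for the (completed) product measure with
   probability x; for a probability outer measure generated by an algebra this
   is equivalent to P*(A) = x and P*(complement A) = 1 - x. *)
Definition prob_is (A : Omega -> Prop) (x : R) : Prop :=
  outer_prob A x /\ outer_prob (fun w => ~ A w) (1 - x).

Definition has_deriv (g : R -> cplx) (t : R) (v : cplx) : Prop :=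
  derivable_pt_lim (fun s => fst (g s)) t (fst v) /\
  derivable_pt_lim (fun s => snd (g s)) t (snd v).

Definition in_arc (z0 : cplx) (th1 th2 : R) (cl1 cl2 : bool) (v : cplx) : Prop :=
  exists th,
    (if cl1 then th1 <= th else th1 < th) /\
    (if cl2 then th <= th2 else th < th2) /\
    v = cmul z0 (cexpi th).

(* The recursion c_k = c_(k-1) / cos^2 (2^-k) telescopes to
   c_n = (2^n sin 2^-n)^2, so theta_k = 2^-k and sqrt (c_n / c_0) -> 1 / sin 1.
   For t in [0,1) exactly one interval I_kj of each level contains t, hence
   Theta_n(t, w) = sum_(k <= n) eps_k 2^-k with eps_k = r_k(t) d_(k, j_k(t))
   independent fair signs: its limit Theta(t, w) is the binary expansion of a
   uniform point of [-1, 1], and alpha(t, w) = z0 exp (i Theta(t, w)).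
   A non-dyadic t has a neighbourhood on which the first N intervals and
   Rademacher signs do not change, so Theta(., w), hence alpha(., w), is
   continuous at t and the fundamental theorem of calculus gives
   f'(t, w) = alpha(t, w).  The event "f'(t) lies on the arc" is thus
   "Theta(t) lies in [th1, th2]"; cylinders on the first M signs cover it with
   mass (th2 - th1)/2 + O(2^-M) and its complement with mass
   1 - (th2 - th1)/2 + O(2^-M), while König's lemma shows that covers of
   complementary sets always have total mass at least 1. *)

From Stdlib Require Import Reals Lra Lia List ZArith Cantor ClassicalEpsilon Classical.
Open Scope R_scope.
Import ListNotations.

(** * Outer measure of cylinder covers *)

Definition coord_eq_dec : forall p q : nat * nat, {p = q} + {p <> q}.
Proof. decide equality; apply Nat.eq_dec. Defined.

Fixpoint cyl_drop (q : nat * nat) (c : cyl) : cyl :=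
  match c with
  | nil => nil
  | p :: c' => if coord_eq_dec (fst p) q then cyl_drop q c' else p :: cyl_drop q c'
  end.

Fixpoint cyl_lookup (q : nat * nat) (c : cyl) : option bool :=
  match c with
  | nil => None
  | p :: c' => if coord_eq_dec (fst p) q then Some (snd p) else cyl_lookup q c'
  end.

Definition cyl_nodup (c : cyl) : Prop := NoDup (map fst c).

Lemma cyl_memP c w :
  cyl_mem c w <-> (forall p, In p c -> w (fst (fst p)) (snd (fst p)) = snd p).
Proof. unfold cyl_mem; rewrite Forall_forall; tauto. Qed.

Lemma in_cyl_drop q c p : In p (cyl_drop q c) -> In p c /\ fst p <> q.
Proof.
  induction c as [|p' c IH]; simpl; [tauto|].
  destruct (coord_eq_dec (fst p') q).
  - intros H; destruct (IH H); tauto.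
  - intros [<-|H]; [tauto|destruct (IH H); tauto].
Qed.

Lemma cyl_lookup_None q c p : cyl_lookup q c = None -> In p c -> fst p <> q.
Proof.
  induction c as [|p' c IH]; simpl; [tauto|].
  destruct (coord_eq_dec (fst p') q); [discriminate|].
  intros H [<-|H']; auto.
Qed.

Lemma cyl_lookup_Some q c b : cyl_lookup q c = Some b -> In (q, b) c.
Proof.
  induction c as [|p' c IH]; simpl; [discriminate|].
  destruct (coord_eq_dec (fst p') q) as [e|].
  - intros H; inversion H; subst; left; destruct p'; reflexivity.
  - intros H; right; auto.
Qed.

Lemma cyl_drop_id q c : ~ In q (map fst c) -> cyl_drop q c = c.
Proof.
  induction c as [|p c IH]; simpl; auto.
  intros H; destruct (coord_eq_dec (fst p) q); [tauto|].
  rewrite IH; tauto.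
Qed.

Lemma cyl_nodup_drop q c : cyl_nodup c -> cyl_nodup (cyl_drop q c).
Proof.
  unfold cyl_nodup; induction c as [|p c IH]; simpl; auto.
  intros H; inversion H; subst.
  destruct (coord_eq_dec (fst p) q); auto.
  simpl; constructor; auto.
  intros Hin; apply in_map_iff in Hin; destruct Hin as [x [Hx Hin]].
  apply in_cyl_drop in Hin; destruct Hin as [Hin _].
  apply H2; rewrite <- Hx; apply in_map; auto.
Qed.

Lemma length_cyl_drop q c b : cyl_nodup c -> cyl_lookup q c = Some b ->
  S (length (cyl_drop q c)) = length c.
Proof.
  unfold cyl_nodup; induction c as [|p c IH]; simpl; [discriminate|].
  intros H; inversion H; subst.
  destruct (coord_eq_dec (fst p) q) as [e|].
  - intros _; rewrite cyl_drop_id; auto. rewrite <- e; auto.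
  - intros Hl; simpl; rewrite IH; auto.
Qed.

(* The cylinders describing [c] inside the slice [w q = b], read as cylinders
   on the remaining coordinates. *)
Definition cyl_restrict (q : nat * nat) (b : bool) (c : cyl) : list cyl :=
  match cyl_lookup q c with
  | None => [c]
  | Some b' => if Bool.eqb b b' then [cyl_drop q c] else []
  end.

Fixpoint cyls_meas (l : list cyl) : R :=
  match l with nil => 0 | c :: l' => cyl_meas c + cyls_meas l' end.

Fixpoint cyls_size (l : list cyl) : nat :=
  match l with nil => 0%nat | c :: l' => (length c + cyls_size l')%nat end.

Lemma cyls_meas_app l1 l2 : cyls_meas (l1 ++ l2) = cyls_meas l1 + cyls_meas l2.
Proof. induction l1; simpl; lra. Qed.

Lemma cyls_size_app l1 l2 : cyls_size (l1 ++ l2) = (cyls_size l1 + cyls_size l2)%nat.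
Proof. induction l1; simpl; lia. Qed.

Lemma cyl_meas_gt0 c : 0 < cyl_meas c.
Proof. unfold cyl_meas; apply pow_lt; lra. Qed.

Lemma cyls_meas_ge0 l : 0 <= cyls_meas l.
Proof. induction l as [|c l IH]; simpl; [lra|]. pose proof (cyl_meas_gt0 c); lra. Qed.

Lemma cyl_meas_le_cyls c l : In c l -> cyl_meas c <= cyls_meas l.
Proof.
  induction l as [|c' l IH]; simpl; [tauto|].
  pose proof (cyls_meas_ge0 l); pose proof (cyl_meas_gt0 c').
  intros [<-|H']; [lra|]. specialize (IH H'); lra.
Qed.

Lemma cyl_restrict_meas q c : cyl_nodup c ->
  2 * cyl_meas c = cyls_meas (cyl_restrict q true c) + cyls_meas (cyl_restrict q false c).
Proof.
  intros Hn; unfold cyl_restrict.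
  destruct (cyl_lookup q c) as [b'|] eqn:E.
  - assert (Hl := length_cyl_drop q c b' Hn E).
    assert (cyl_meas c * 2 = cyl_meas (cyl_drop q c)).
    { unfold cyl_meas; rewrite <- Hl; simpl; field. }
    destruct b'; simpl; lra.
  - simpl; lra.
Qed.

Lemma cyl_restrict_size q b c : (cyls_size (cyl_restrict q b c) <= length c)%nat.
Proof.
  unfold cyl_restrict.
  destruct (cyl_lookup q c); simpl; [|lia].
  destruct (Bool.eqb b b0); simpl; [|lia].
  clear; induction c; simpl; [lia|]. destruct (coord_eq_dec (fst a) q); simpl; lia.
Qed.

Lemma cyl_restrict_size_lt q b c : cyl_nodup c -> cyl_lookup q c <> None ->
  (cyls_size (cyl_restrict q b c) < length c)%nat.
Proof.
  intros Hn; unfold cyl_restrict.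
  destruct (cyl_lookup q c) as [b'|] eqn:E; [|tauto]. intros _.
  destruct (Bool.eqb b b'); simpl.
  - pose proof (length_cyl_drop q c b' Hn E); lia.
  - destruct c; simpl in *; [discriminate| lia].
Qed.

Definition cyls_restrict (q : nat * nat) (b : bool) (L : list cyl) : list cyl :=
  flat_map (cyl_restrict q b) L.

Lemma cyls_restrict_meas q L : (forall c, In c L -> cyl_nodup c) ->
  2 * cyls_meas L = cyls_meas (cyls_restrict q true L) + cyls_meas (cyls_restrict q false L).
Proof.
  induction L as [|c L IH]; simpl; [lra|].
  intros H; unfold cyls_restrict in *; simpl; rewrite !cyls_meas_app.
  pose proof (cyl_restrict_meas q c (H c (or_introl eq_refl))).
  pose proof (IH (fun c H' => H c (or_intror H'))). lra.
Qed.

Lemma cyls_restrict_size_lt q b L c : (forall c, In c L -> cyl_nodup c) ->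
  In c L -> cyl_lookup q c <> None -> (cyls_size (cyls_restrict q b L) < cyls_size L)%nat.
Proof.
  unfold cyls_restrict; induction L as [|c' L IH]; simpl; [tauto|].
  assert (Hle : forall L, (cyls_size (flat_map (cyl_restrict q b) L) <= cyls_size L)%nat).
  { induction L0 as [|c0 L0 IH0]; simpl; [lia|].
    rewrite cyls_size_app. pose proof (cyl_restrict_size q b c0); lia. }
  intros Hn [->|Hin] Hl; rewrite cyls_size_app.
  - pose proof (cyl_restrict_size_lt q b c (Hn c (or_introl eq_refl)) Hl).
    pose proof (Hle L); lia.
  - pose proof (cyl_restrict_size q b c').
    specialize (IH (fun c H => Hn c (or_intror H)) Hin Hl); lia.
Qed.

Lemma cyls_restrict_nodup q b L : (forall c, In c L -> cyl_nodup c) ->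
  forall c, In c (cyls_restrict q b L) -> cyl_nodup c.
Proof.
  intros H c Hc; unfold cyls_restrict in Hc; apply in_flat_map in Hc.
  destruct Hc as [c0 [Hc0 Hin]]. unfold cyl_restrict in Hin.
  destruct (cyl_lookup q c0); [destruct (Bool.eqb b b0)|]; simpl in Hin;
    try destruct Hin as [<-|[]]; try tauto.
  - apply cyl_nodup_drop; auto.
  - auto.
Qed.

Definition set_coord (w : Omega) (q : nat * nat) (b : bool) : Omega :=
  fun k j => if coord_eq_dec (k, j) q then b else w k j.

Lemma set_coord_other w q b p : p <> q -> set_coord w q b (fst p) (snd p) = w (fst p) (snd p).
Proof.
  intros ne; destruct p as [k j]; unfold set_coord; cbn [fst snd].
  destruct (coord_eq_dec (k, j) q); tauto.
Qed.

Lemma cyls_restrict_cover q b L :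
  (forall w, exists c, In c L /\ cyl_mem c w) ->
  forall w, exists c, In c (cyls_restrict q b L) /\ cyl_mem c w.
Proof.
  intros H w. destruct (H (set_coord w q b)) as [c [Hin Hm]].
  rewrite cyl_memP in Hm.
  assert (Hin_r : forall c', In c' (cyl_restrict q b c) -> In c' (cyls_restrict q b L)).
  { intros c' Hc'; apply in_flat_map; eauto. }
  unfold cyl_restrict in Hin_r.
  destruct (cyl_lookup q c) as [b'|] eqn:E.
  - assert (b = b') as <-.
    { specialize (Hm _ (cyl_lookup_Some q c b' E)).
      destruct q as [k j]; unfold set_coord in Hm; cbn [fst snd] in Hm.
      destruct (coord_eq_dec (k, j) (k, j)); tauto. }
    rewrite Bool.eqb_reflx in Hin_r.
    exists (cyl_drop q c); split; [apply Hin_r; left; auto|].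
    apply cyl_memP; intros p Hp. apply in_cyl_drop in Hp as [Hp Hq].
    rewrite <- (Hm p Hp), set_coord_other; auto.
  - exists c; split; [apply Hin_r; left; auto|].
    apply cyl_memP; intros p Hp.
    rewrite <- (Hm p Hp), set_coord_other; auto. apply (cyl_lookup_None q c p E Hp).
Qed.

(* Conditioning on a coordinate fixed by some cylinder halves the mass in each
   slice and strictly shrinks the family, so induction on its size applies. *)
Lemma cyls_meas_cover_ge1 L :
  (forall c, In c L -> cyl_nodup c) ->
  (forall w, exists c, In c L /\ cyl_mem c w) -> 1 <= cyls_meas L.
Proof.
  remember (cyls_size L) as n eqn:En. revert L En.
  induction n as [n IH] using lt_wf_ind; intros L En Hn Hc.
  destruct (find (fun c : cyl => match c with nil => false | _ => true end) L)
    as [[|p c']|] eqn:F.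
  - destruct (find_some _ _ F) as [_ Hne]; discriminate.
  - destruct (find_some _ _ F) as [Hin _].
    assert (Hlk : cyl_lookup (fst p) (p :: c') <> None).
    { simpl. destruct (coord_eq_dec (fst p) (fst p)); [discriminate|tauto]. }
    assert (Hhalf : forall b, 1 <= cyls_meas (cyls_restrict (fst p) b L)).
    { intros b. pose proof (cyls_restrict_size_lt (fst p) b L _ Hn Hin Hlk).
      eapply IH; [|reflexivity|apply cyls_restrict_nodup|apply cyls_restrict_cover]; eauto.
      lia. }
    pose proof (Hhalf true); pose proof (Hhalf false).
    pose proof (cyls_restrict_meas (fst p) L Hn). lra.
  - destruct (Hc (fun _ _ => true)) as [c [Hin _]].
    pose proof (find_none _ _ F c Hin) as Hc0. destruct c; [|discriminate].
    pose proof (cyl_meas_le_cyls nil L Hin). unfold cyl_meas in *; simpl in *; lra.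
Qed.

Definition enum_coord (i : nat) : nat * nat := Cantor.of_nat i.

Lemma enum_coord_inj i j : enum_coord i = enum_coord j -> i = j.
Proof.
  intro H. rewrite <- (cancel_to_of i), <- (cancel_to_of j).
  unfold enum_coord in H; rewrite H; auto.
Qed.

Definition agree_upto (n : nat) (w g : Omega) : Prop :=
  forall i, (i < n)%nat ->
    w (fst (enum_coord i)) (snd (enum_coord i)) = g (fst (enum_coord i)) (snd (enum_coord i)).

Section Compactness.
Variable cs : nat -> list cyl.

Definition prefix_covered (n : nat) (g : Omega) : Prop :=
  exists N, forall w, agree_upto n w g ->
    exists m c, (m <= N)%nat /\ In c (cs m) /\ cyl_mem c w.

Lemma prefix_covered_split n g :
  prefix_covered (S n) (set_coord g (enum_coord n) false) ->
  prefix_covered (S n) (set_coord g (enum_coord n) true) ->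
  prefix_covered n g.
Proof.
  intros [N1 H1] [N2 H2]. exists (Nat.max N1 N2). intros w Hw.
  assert (Ha : forall b, w (fst (enum_coord n)) (snd (enum_coord n)) = b ->
                 agree_upto (S n) w (set_coord g (enum_coord n) b)).
  { intros b Hb i Hi. unfold set_coord.
    destruct (coord_eq_dec (fst (enum_coord i), snd (enum_coord i)) (enum_coord n)) as [e|ne].
    - rewrite <- Hb. destruct (enum_coord i) as [x y]. simpl in e. rewrite e; reflexivity.
    - apply Hw. assert (i <> n) by (intro; subst; destruct (enum_coord n); simpl in ne; tauto).
      lia. }
  destruct (w (fst (enum_coord n)) (snd (enum_coord n))) eqn:E.
  - destruct (H2 w (Ha true eq_refl)) as [m [c [Hm Hc]]]. exists m, c; split; [lia|auto].
  - destruct (H1 w (Ha false eq_refl)) as [m [c [Hm Hc]]]. exists m, c; split; [lia|auto].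
Qed.

Fixpoint bad_branch (n : nat) : Omega :=
  match n with
  | O => fun _ _ => false
  | S m =>
      if excluded_middle_informative
           (prefix_covered (S m) (set_coord (bad_branch m) (enum_coord m) false))
      then set_coord (bad_branch m) (enum_coord m) true
      else set_coord (bad_branch m) (enum_coord m) false
  end.

Lemma bad_branch_uncovered :
  ~ prefix_covered 0 (bad_branch 0) -> forall n, ~ prefix_covered n (bad_branch n).
Proof.
  intros H0; induction n as [|n IH]; auto. simpl.
  destruct (excluded_middle_informative _); auto.
  intro G2; apply IH; apply prefix_covered_split; auto.
Qed.

Lemma bad_branch_stable i n : (i < n)%nat ->
  bad_branch n (fst (enum_coord i)) (snd (enum_coord i))
  = bad_branch (S i) (fst (enum_coord i)) (snd (enum_coord i)).
Proof.
  induction n as [|n IH]; intros Hi; [lia|].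
  destruct (Nat.eq_dec i n) as [->|ne]; auto.
  rewrite <- IH by lia. simpl.
  assert (Hq : enum_coord i <> enum_coord n) by (intro e; apply ne, enum_coord_inj, e).
  destruct (excluded_middle_informative _); apply set_coord_other; auto.
Qed.

Fixpoint cyl_max_index (c : cyl) : nat :=
  match c with nil => 0%nat | p :: c' => Nat.max (to_nat (fst p)) (cyl_max_index c') end.

Lemma cyl_max_index_ge c p : In p c -> (to_nat (fst p) <= cyl_max_index c)%nat.
Proof.
  induction c as [|p' c IH]; simpl; [tauto|].
  intros [->|H]; [lia|]. specialize (IH H); lia.
Qed.

(* König's lemma on {0,1}^(N x N): if no finite subfamily covers, the
   coordinates can be fixed one at a time, in Cantor order, so that no prefix is
   finitely covered; the limit point then lies in no cylinder at all. *)
Lemma cyl_cover_compact :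
  (forall w, exists m c, In c (cs m) /\ cyl_mem c w) ->
  exists N, forall w, exists m c, (m <= N)%nat /\ In c (cs m) /\ cyl_mem c w.
Proof.
  intros Hcov. apply NNPP; intro Hno.
  assert (H0 : ~ prefix_covered 0 (bad_branch 0)).
  { intros [N HN]. apply Hno. exists N. intros w; apply HN. intros i Hi; lia. }
  pose (limit := fun k j => bad_branch (S (to_nat (k, j))) k j).
  destruct (Hcov limit) as [m [c [Hin Hm]]].
  apply (bad_branch_uncovered H0 (S (cyl_max_index c))). exists m.
  intros w Hw. exists m, c; split; [lia|split; auto].
  rewrite cyl_memP in *. intros p Hp. rewrite <- (Hm p Hp).
  pose proof (cyl_max_index_ge c p Hp).
  set (i := to_nat (fst p)) in *.
  assert (Hqi : enum_coord i = fst p) by apply cancel_of_to.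
  specialize (Hw i ltac:(lia)). rewrite Hqi in Hw. rewrite Hw.
  rewrite <- Hqi at 1 2. rewrite bad_branch_stable by lia. rewrite Hqi.
  unfold limit, i; destruct (fst p); reflexivity.
Qed.

End Compactness.

Definition option_list (o : option cyl) : list cyl :=
  match o with None => [] | Some c => [c] end.

Definition cover_term (cs : nat -> option cyl) (n : nat) : R :=
  match cs n with Some c => cyl_meas c | None => 0 end.

Lemma cyls_meas_option_list cs n : cyls_meas (option_list (cs n)) = cover_term cs n.
Proof. unfold cover_term; destruct (cs n); simpl; lra. Qed.

Lemma partial_sum_le_cover cs s : infinite_sum (cover_term cs) s ->
  forall N, sum_f_R0 (cover_term cs) N <= s.
Proof.
  intros H N. apply growing_ineq; [|exact H].
  intro n; simpl. unfold cover_term; destruct (cs (S n)); [pose proof (cyl_meas_gt0 c)|]; lra.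
Qed.

Lemma cover_sum_compl_ge1 A B s1 s2 : cover_sum A s1 -> cover_sum B s2 ->
  (forall w, A w \/ B w) -> 1 <= s1 + s2.
Proof.
  intros [cs1 [N1 [C1 S1]]] [cs2 [N2 [C2 S2]]] HAB.
  pose (cs := fun n => option_list (cs1 n) ++ option_list (cs2 n)).
  assert (Hc : forall w, exists m c, In c (cs m) /\ cyl_mem c w).
  { intro w; destruct (HAB w) as [Ha|Hb].
    - destruct (C1 w Ha) as [n [c [E M]]]. exists n, c; split; auto.
      unfold cs; rewrite E; simpl; auto.
    - destruct (C2 w Hb) as [n [c [E M]]]. exists n, c; split; auto.
      unfold cs; rewrite E; apply in_or_app; right; simpl; auto. }
  destruct (cyl_cover_compact cs Hc) as [N HN].
  assert (HL : 1 <= cyls_meas (flat_map cs (seq 0 (S N)))).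
  { apply cyls_meas_cover_ge1.
    - intros c Hin. apply in_flat_map in Hin as [m [_ Hm]].
      unfold cs in Hm; apply in_app_or in Hm as [Hm|Hm].
      + destruct (cs1 m) eqn:E; simpl in Hm; [|tauto]. destruct Hm as [<-|[]]; exact (N1 m _ E).
      + destruct (cs2 m) eqn:E; simpl in Hm; [|tauto]. destruct Hm as [<-|[]]; exact (N2 m _ E).
    - intro w. destruct (HN w) as [m [c [Hm [Hin Hmem]]]]. exists c; split; auto.
      apply in_flat_map. exists m; split; auto. apply in_seq; lia. }
  assert (Heq : forall N, cyls_meas (flat_map cs (seq 0 (S N))) =
                 sum_f_R0 (cover_term cs1) N + sum_f_R0 (cover_term cs2) N).
  { induction N0 as [|N0 IH].
    - simpl. rewrite app_nil_r. unfold cs. rewrite cyls_meas_app, !cyls_meas_option_list.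
      reflexivity.
    - rewrite seq_S, flat_map_app, cyls_meas_app, IH. simpl. rewrite app_nil_r.
      unfold cs. rewrite cyls_meas_app, !cyls_meas_option_list. lra. }
  rewrite Heq in HL.
  pose proof (partial_sum_le_cover cs1 s1 S1 N). pose proof (partial_sum_le_cover cs2 s2 S2 N).
  lra.
Qed.

Lemma sum_nth_error_cyls L n : (length L <= S n)%nat ->
  sum_f_R0 (cover_term (fun k => nth_error L k)) n = cyls_meas L.
Proof.
  revert n; induction L as [|c L IH]; intros n Hn.
  - transitivity (sum_f_R0 (fun _ => 0) n); [apply sum_eq; intros [|i] _; reflexivity|].
    clear; induction n; simpl in *; lra.
  - destruct n as [|n].
    + destruct L; [|simpl in Hn; lia]. simpl; unfold cover_term; simpl; lra.
    + rewrite decomp_sum by lia. simpl pred. rewrite IH by (simpl in Hn; lia).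
      reflexivity.
Qed.

Lemma cover_sum_of_list (A : Omega -> Prop) L :
  (forall c, In c L -> cyl_nodup c) ->
  (forall w, A w -> exists c, In c L /\ cyl_mem c w) -> cover_sum A (cyls_meas L).
Proof.
  intros Hn Hc. exists (fun k => nth_error L k). split; [|split].
  - intros n c E. apply Hn. eapply nth_error_In; eauto.
  - intros w Hw. destruct (Hc w Hw) as [c [Hin Hm]].
    destruct (In_nth_error _ _ Hin) as [n E]. exists n, c; auto.
  - intros eps He. exists (length L). intros n Hln.
    pose proof (sum_nth_error_cyls L n ltac:(lia)) as E.
    unfold cover_term in E; cbv beta in *; rewrite E.
    unfold Rdist; rewrite Rminus_diag, Rabs_R0; lra.
Qed.

(* Since any covers of A and of its complement have total mass >= 1, covers of
   mass close to x and 1 - x pin down both outer measures. *)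
Lemma prob_is_of_covers A x :
  (forall eps, 0 < eps -> exists s, cover_sum A s /\ s <= x + eps) ->
  (forall eps, 0 < eps -> exists s, cover_sum (fun w => ~ A w) s /\ s <= 1 - x + eps) ->
  prob_is A x.
Proof.
  intros U1 U2.
  assert (Tot : forall s1 s2, cover_sum A s1 -> cover_sum (fun w => ~ A w) s2 -> 1 <= s1 + s2).
  { intros s1 s2 H1 H2. apply (cover_sum_compl_ge1 A (fun w => ~ A w)); auto.
    intro w; apply classic. }
  split; split.
  - intros s Hs. apply Rnot_lt_le; intro Hlt.
    destruct (U2 ((x - s)/2) ltac:(lra)) as [s2 [H2 Hle]].
    pose proof (Tot _ _ Hs H2); lra.
  - intros y Hy. apply Rnot_lt_le; intro Hlt.
    destruct (U1 ((y - x)/2) ltac:(lra)) as [s [H1 Hle]].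
    pose proof (Hy s H1); lra.
  - intros s Hs. apply Rnot_lt_le; intro Hlt.
    destruct (U1 ((1 - x - s)/2) ltac:(lra)) as [s1 [H1 Hle]].
    pose proof (Tot _ _ H1 Hs); lra.
  - intros y Hy. apply Rnot_lt_le; intro Hlt.
    destruct (U2 ((y - (1 - x))/2) ltac:(lra)) as [s [H1 Hle]].
    pose proof (Hy s H1); lra.
Qed.

(** * Random binary expansions *)

Lemma Rabs_le_between x e : Rabs x <= e -> -e <= x <= e.
Proof. unfold Rabs; destruct (Rcase_abs x); lra. Qed.

Lemma half_pow_gt0 n : 0 < (/2) ^ n.
Proof. apply pow_lt; lra. Qed.

Lemma half_pow_small eps : 0 < eps -> exists M, (/2) ^ M < eps.
Proof.
  intros He. destruct (pow_lt_1_zero (/2) ltac:(rewrite Rabs_pos_eq; lra) eps He) as [N HN].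
  exists N. specialize (HN N (le_n N)). rewrite Rabs_pos_eq in HN; auto.
  apply pow_le; lra.
Qed.

Lemma half_pow_antimono m n : (m <= n)%nat -> (/2) ^ n <= (/2) ^ m.
Proof.
  induction 1; [lra|]. simpl. pose proof (half_pow_gt0 m0). lra.
Qed.

Lemma two_pow_half_pow M : 2 ^ M * (/2) ^ M = 1.
Proof. rewrite <- Rpow_mult_distr. replace (2 * /2) with 1 by field. apply pow1. Qed.

Definition inb (a b x : R) : bool :=
  if Rle_dec a x then (if Rle_dec x b then true else false) else false.

Lemma inb_true a b x : a <= x <= b -> inb a b x = true.
Proof. intros [h1 h2]; unfold inb; destruct (Rle_dec a x); destruct (Rle_dec x b); auto; lra. Qed.

Lemma count_in_interval a b m K :
  INR (length (filter (fun i => inb a b (INR i)) (seq m K))) <= Rmax 0 (b - Rmax a (INR m) + 1).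
Proof.
  revert m; induction K as [|K IH]; intros m; simpl; [apply Rmax_l|].
  specialize (IH (S m)); rewrite S_INR in IH.
  unfold inb at 1; destruct (Rle_dec a (INR m)); [destruct (Rle_dec (INR m) b)|];
    simpl length; try rewrite S_INR; unfold Rmax in *; repeat destruct Rle_dec; lra.
Qed.

(* For fixed t, Theta_n(t, .) has this shape: one coordinate [key k] per level
   k, with the Rademacher sign absorbed into [sgn k]. *)
Section RandomBinaryExpansion.
Variable key : nat -> nat * nat.
Hypothesis key_fst : forall k, fst (key k) = k.
Variable sgn : nat -> bool.

Definition sign_bit (k : nat) (w : Omega) : bool :=
  Bool.eqb (w (fst (key k)) (snd (key k))) (sgn k).
Definition sign (k : nat) (w : Omega) : R := if sign_bit k w then 1 else -1.

Definition partial_angle (M : nat) (w : Omega) : R := rsum1 M (fun k => sign k w * (/2) ^ k).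

Fixpoint prefix_index (M : nat) (w : Omega) : nat :=
  match M with
  | O => O
  | S m => (2 * prefix_index m w + (if sign_bit (S m) w then 1 else 0))%nat
  end.

Lemma prefix_index_S M w :
  prefix_index (S M) w = (2 * prefix_index M w + (if sign_bit (S M) w then 1 else 0))%nat.
Proof. reflexivity. Qed.

Lemma partial_angle_index M w :
  partial_angle M w = -1 + (2 * INR (prefix_index M w) + 1) * (/2) ^ M.
Proof.
  induction M as [|M IH]; unfold partial_angle in *; simpl rsum1; [simpl; lra|].
  rewrite prefix_index_S, IH. unfold sign. rewrite plus_INR, mult_INR. simpl pow.
  destruct (sign_bit (S M) w); simpl INR; field.
Qed.

Lemma prefix_index_lt M w : (prefix_index M w < 2 ^ M)%nat.
Proof. induction M; simpl; [lia|]. destruct (sign_bit (S M) w); lia. Qed.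

Fixpoint prefix_cyl (M : nat) (i : nat) : cyl :=
  match M with
  | O => []
  | S m => (key (S m), Bool.eqb (Nat.odd i) (sgn (S m))) :: prefix_cyl m (Nat.div2 i)
  end.

Lemma length_prefix_cyl M i : length (prefix_cyl M i) = M.
Proof. revert i; induction M; intros; simpl; auto. Qed.

Lemma prefix_cyl_levels M i p : In p (prefix_cyl M i) -> (1 <= fst (fst p) <= M)%nat.
Proof.
  revert i; induction M as [|M IH]; intros i; simpl; [tauto|].
  intros [<-|H]; [simpl; rewrite key_fst; lia|]. specialize (IH _ H); lia.
Qed.

Lemma prefix_cyl_nodup M i : cyl_nodup (prefix_cyl M i).
Proof.
  unfold cyl_nodup; revert i; induction M as [|M IH]; intros i; simpl; [constructor|].
  constructor; auto. intro Hin. apply in_map_iff in Hin as [p [Hp Hin]].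
  apply prefix_cyl_levels in Hin. rewrite Hp, key_fst in Hin. lia.
Qed.

Lemma odd_double_plus_bit (m : nat) (b : bool) : Nat.odd (2 * m + (if b then 1 else 0)) = b.
Proof.
  destruct b; [rewrite Nat.odd_add, Nat.odd_mul; simpl; now destruct (Nat.odd m)|].
  now rewrite Nat.add_0_r, Nat.odd_mul.
Qed.

Lemma div2_double_plus_bit (m : nat) (b : bool) : Nat.div2 (2 * m + (if b then 1 else 0)) = m.
Proof.
  destruct b; [replace (2 * m + 1)%nat with (S (2 * m)) by lia; apply Nat.div2_succ_double|].
  rewrite Nat.add_0_r; apply Nat.div2_double.
Qed.

Lemma prefix_cyl_mem M w : cyl_mem (prefix_cyl M (prefix_index M w)) w.
Proof.
  induction M as [|M IH]; [constructor|].
  rewrite prefix_index_S. constructor; cbn [fst snd].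
  - rewrite odd_double_plus_bit. unfold sign_bit.
    destruct (w (fst (key (S M))) (snd (key (S M)))), (sgn (S M)); reflexivity.
  - rewrite div2_double_plus_bit; exact IH.
Qed.

Lemma partial_angle_diff m n w : (m <= n)%nat ->
  Rabs (partial_angle n w - partial_angle m w) <= (/2) ^ m - (/2) ^ n.
Proof.
  induction 1 as [|n Hn IH].
  - unfold Rminus; rewrite Rplus_opp_r, Rabs_R0; lra.
  - replace (partial_angle (S n) w - partial_angle m w) with
      ((partial_angle n w - partial_angle m w) + sign (S n) w * (/ 2) ^ S n)
      by (unfold partial_angle; cbn [rsum1]; ring).
    eapply Rle_trans; [apply Rabs_triang|]. rewrite Rabs_mult.
    replace (Rabs (sign (S n) w)) with 1
      by (unfold sign, Rabs; destruct (sign_bit (S n) w), Rcase_abs; lra).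
    rewrite (Rabs_pos_eq ((/2)^S n)) by (apply pow_le; lra). simpl pow in *. lra.
Qed.

Lemma partial_angle_cauchy w : Cauchy_crit (fun n => partial_angle n w).
Proof.
  intros eps He. destruct (half_pow_small eps He) as [N HN]. exists N.
  intros n m Hn Hm. unfold Rdist.
  destruct (Nat.le_ge_cases m n) as [h|h].
  - pose proof (partial_angle_diff m n w h). pose proof (half_pow_antimono N m Hm).
    pose proof (half_pow_gt0 n). lra.
  - pose proof (partial_angle_diff n m w h). pose proof (half_pow_antimono N n Hn).
    pose proof (half_pow_gt0 m). rewrite Rabs_minus_sym. lra.
Qed.

Definition limit_angle (w : Omega) : R := proj1_sig (R_complete _ (partial_angle_cauchy w)).

Lemma limit_angle_cv w : Un_cv (fun n => partial_angle n w) (limit_angle w).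
Proof. unfold limit_angle. destruct (R_complete _ _); auto. Qed.

Lemma limit_angle_approx M w : Rabs (limit_angle w - partial_angle M w) <= (/2) ^ M.
Proof.
  apply Rnot_lt_le; intro Hlt.
  destruct (limit_angle_cv w (Rabs (limit_angle w - partial_angle M w) - (/2) ^ M)
              ltac:(lra)) as [N HN].
  set (n := Nat.max N M). specialize (HN n ltac:(lia)). unfold Rdist in HN.
  pose proof (partial_angle_diff M n w ltac:(lia)). pose proof (half_pow_gt0 n).
  pose proof (Rabs_triang (limit_angle w - partial_angle n w)
                          (partial_angle n w - partial_angle M w)).
  replace (limit_angle w - partial_angle n w + (partial_angle n w - partial_angle M w))
    with (limit_angle w - partial_angle M w) in H1 by ring.
  rewrite Rabs_minus_sym in HN. lra.
Qed.

Lemma limit_angle_bound w : -1 <= limit_angle w <= 1.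
Proof.
  pose proof (limit_angle_approx 0 w) as H. unfold partial_angle in H; simpl in H.
  rewrite Rminus_0_r in H. apply Rabs_le_between in H. lra.
Qed.

Lemma limit_angle_prefix_bounds M w :
  -1 + 2 * INR (prefix_index M w) * (/2)^M <= limit_angle w
  <= -1 + 2 * (INR (prefix_index M w) + 1) * (/2)^M.
Proof.
  pose proof (limit_angle_approx M w) as H. rewrite partial_angle_index in H.
  apply Rabs_le_between in H. lra.
Qed.

(* The prefixes i of length M whose dyadic cell [-1 + 2 i 2^-M, -1 + 2 (i+1) 2^-M]
   meets [lo, hi] number at most (hi - lo) 2^M / 2 + 2. *)
Lemma interval_cyl_cover lo hi eps : lo <= hi -> 0 < eps ->
  exists L, (forall c, In c L -> cyl_nodup c) /\
    (forall w, lo <= limit_angle w <= hi -> exists c, In c L /\ cyl_mem c w) /\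
    cyls_meas L <= (hi - lo) / 2 + eps.
Proof.
  intros Hlh He. destruct (half_pow_small (eps/2) ltac:(lra)) as [M HM].
  set (h := (/2)^M) in *. set (P := 2 ^ M).
  assert (HPh : P * h = 1) by apply two_pow_half_pow.
  assert (Hh : 0 < h) by apply half_pow_gt0.
  assert (HP : 0 < P) by (apply pow_lt; lra).
  set (a := (lo + 1) * P / 2 - 1). set (b := (hi + 1) * P / 2).
  set (l := filter (fun i => inb a b (INR i)) (seq 0 (2 ^ M))).
  exists (map (prefix_cyl M) l). split; [|split].
  - intros c Hc. apply in_map_iff in Hc as [i [<- _]]. apply prefix_cyl_nodup.
  - intros w Hw. exists (prefix_cyl M (prefix_index M w)). split; [|apply prefix_cyl_mem].
    apply in_map, filter_In; split; [apply in_seq; pose proof (prefix_index_lt M w); lia|].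
    apply inb_true. pose proof (limit_angle_prefix_bounds M w). fold h in H.
    set (i := INR (prefix_index M w)) in *.
    assert (E : i = i * (P * h)) by (rewrite HPh; ring).
    unfold a, b; split; nra.
  - assert (Hmeas : forall l', cyls_meas (map (prefix_cyl M) l') = INR (length l') * h).
    { induction l' as [|i l' IH]; cbn [map cyls_meas length]; [simpl; lra|].
      rewrite IH. unfold cyl_meas. rewrite length_prefix_cyl, S_INR; fold h; lra. }
    rewrite Hmeas. pose proof (count_in_interval a b 0 (2 ^ M)) as Hc. fold l in Hc.
    assert (Hab : Rmax 0 (b - Rmax a (INR 0) + 1) <= b - a + 1).
    { assert (0 <= (hi - lo) * P) by (apply Rmult_le_pos; lra).
      unfold a, b in *; simpl INR; unfold Rmax; repeat destruct Rle_dec; lra. }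
    assert ((b - a + 1) * h = (hi - lo) / 2 + 2 * h).
    { unfold a, b. replace (((hi + 1) * P / 2 - ((lo + 1) * P / 2 - 1) + 1) * h)
        with ((hi - lo) * (P * h) / 2 + 2 * h) by field.
      rewrite HPh; field. }
    assert (INR (length l) * h <= (b - a + 1) * h) by (apply Rmult_le_compat_r; lra).
    lra.
Qed.

Lemma prob_limit_angle_interval (A : Omega -> Prop) lo hi :
  -1 <= lo -> lo <= hi -> hi <= 1 ->
  (forall w, A w -> lo <= limit_angle w <= hi) ->
  (forall w, ~ A w -> limit_angle w <= lo \/ hi <= limit_angle w) ->
  prob_is A ((hi - lo) / 2).
Proof.
  intros Hlo Hlh Hhi HA HnA. apply prob_is_of_covers.
  - intros eps He. destruct (interval_cyl_cover lo hi eps Hlh He) as [L [Hn [Hc Hm]]].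
    exists (cyls_meas L); split; auto. apply cover_sum_of_list; auto.
  - intros eps He.
    destruct (interval_cyl_cover (-1) lo (eps/2) Hlo ltac:(lra)) as [L1 [Hn1 [Hc1 Hm1]]].
    destruct (interval_cyl_cover hi 1 (eps/2) Hhi ltac:(lra)) as [L2 [Hn2 [Hc2 Hm2]]].
    exists (cyls_meas (L1 ++ L2)); split; [|rewrite cyls_meas_app; lra].
    apply cover_sum_of_list.
    + intros c Hc; apply in_app_or in Hc as [Hc|Hc]; auto.
    + intros w Hw. pose proof (limit_angle_bound w).
      destruct (HnA w Hw) as [Hw'|Hw'].
      * destruct (Hc1 w ltac:(lra)) as [c [Hin Hm]]. exists c; split; auto.
        apply in_or_app; auto.
      * destruct (Hc2 w ltac:(lra)) as [c [Hin Hm]]. exists c; split; auto.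
        apply in_or_app; auto.
Qed.

End RandomBinaryExpansion.

(** * The sequence c_k *)

Lemma half_pow_le1 n : (/2) ^ n <= 1.
Proof. induction n; simpl; lra. Qed.

Lemma sin_half_pow_gt0 n : 0 < sin ((/2) ^ n).
Proof.
  apply sin_gt_0; [apply half_pow_gt0|].
  pose proof (half_pow_le1 n); pose proof PI2_1; lra.
Qed.

Lemma cos_half_pow_gt0 n : 0 < cos ((/2) ^ n).
Proof.
  apply cos_gt_0; pose proof (half_pow_gt0 n); pose proof (half_pow_le1 n); pose proof PI2_1; lra.
Qed.

Lemma sin1_gt0 : 0 < sin 1.
Proof. apply sin_gt_0; pose proof PI2_1; lra. Qed.

(* sin (2 x) = 2 sin x cos x makes the recursion telescope. *)
Lemma cseq_closed n : cseq n = (2 ^ n * sin ((/2) ^ n)) ^ 2.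
Proof.
  induction n as [|n IH]; [simpl; ring|].
  change (cseq (S n)) with (cseq n / cos (/ 2 ^ S n) ^ 2). rewrite <- pow_inv, IH.
  pose proof (cos_half_pow_gt0 (S n)) as Hc. set (x := (/2) ^ S n) in *.
  replace ((/2) ^ n) with (2 * x) by (unfold x; simpl; field).
  rewrite sin_2a. replace (2 ^ S n) with (2 * 2 ^ n) by reflexivity. field. lra.
Qed.

Lemma cseq_gt0 n : 0 < cseq n.
Proof.
  rewrite cseq_closed. pose proof (sin_half_pow_gt0 n). pose proof (pow_lt 2 n ltac:(lra)).
  apply pow_lt. nra.
Qed.

Lemma sqrt_cseq_ratio n : sqrt (cseq n / cseq 0) = 2 ^ n * sin ((/2) ^ n) / sin 1.
Proof.
  rewrite !cseq_closed. pose proof (sin_half_pow_gt0 n). pose proof (pow_lt 2 n ltac:(lra)).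
  pose proof sin1_gt0.
  replace ((2 ^ n * sin ((/2) ^ n)) ^ 2 / (2 ^ 0 * sin ((/2) ^ 0)) ^ 2)
    with ((2 ^ n * sin ((/2) ^ n) / sin 1) ^ 2) by (simpl; field; lra).
  apply sqrt_pow2. apply Rmult_le_pos; [nra|]. left; apply Rinv_0_lt_compat; lra.
Qed.

Lemma theta_half_pow k : (1 <= k)%nat -> theta k = (/2) ^ k.
Proof.
  intros Hk. destruct k as [|m]; [lia|]. unfold theta. simpl pred.
  set (x := (/2) ^ S m).
  assert (E : cseq m = cseq (S m) * cos x ^ 2).
  { unfold x; change (cseq (S m)) with (cseq m / cos (/ 2 ^ S m) ^ 2); rewrite <- pow_inv.
    pose proof (cos_half_pow_gt0 (S m)). field. lra. }
  pose proof (cseq_gt0 (S m)). pose proof (sin2_cos2 x). unfold Rsqr in *.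
  replace ((cseq (S m) - cseq m) / cseq (S m)) with (sin x ^ 2).
  2:{ rewrite E. replace (sin x ^ 2) with (1 - cos x ^ 2) by (simpl; lra). field; lra. }
  rewrite sqrt_pow2 by (left; apply sin_half_pow_gt0). apply asin_sin.
  pose proof (half_pow_gt0 (S m)); pose proof (half_pow_le1 (S m)); pose proof PI2_1.
  unfold x; lra.
Qed.

Lemma two_pow_sin_half_pow_cv : Un_cv (fun n => 2 ^ n * sin ((/2) ^ n)) 1.
Proof.
  intros eps He. pose proof (derivable_pt_lim_sin 0) as D. rewrite cos_0 in D.
  destruct (D eps He) as [del Hdel].
  destruct (half_pow_small del (cond_pos del)) as [N HN]. exists N. intros n Hn.
  pose proof (half_pow_gt0 n) as Hpos.
  specialize (Hdel ((/2) ^ n) (Rgt_not_eq _ _ Hpos)).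
  rewrite Rabs_pos_eq in Hdel by lra.
  specialize (Hdel ltac:(pose proof (half_pow_antimono N n Hn); lra)).
  rewrite Rplus_0_l, sin_0, Rminus_0_r in Hdel. unfold Rdist.
  replace (2 ^ n * sin ((/2) ^ n)) with (sin ((/2) ^ n) / (/2) ^ n); auto.
  rewrite pow_inv. field. apply pow_nonzero; lra.
Qed.

(** * Rademacher functions and dyadic cells *)

Lemma floorR_spec y : IZR (floorR y) <= y < IZR (floorR y) + 1.
Proof. unfold floorR. pose proof (base_Int_part y). lra. Qed.

Lemma floorR_le_iff z y : IZR z <= y <-> (z <= floorR y)%Z.
Proof.
  pose proof (floorR_spec y) as Hy. split; intros H.
  - destruct (Z_le_gt_dec z (floorR y)) as [h|h]; auto.
    assert (Hz : IZR (floorR y + 1) <= IZR z) by (apply IZR_le; lia).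
    rewrite plus_IZR in Hz. lra.
  - apply IZR_le in H. lra.
Qed.

Lemma floorR_unique z y : IZR z <= y < IZR z + 1 -> floorR y = z.
Proof.
  intros [h1 h2]. apply floorR_le_iff in h1. pose proof (floorR_spec y).
  destruct (Z.eq_dec (floorR y) z) as [e|ne]; auto.
  assert (Hz : IZR (z + 1) <= IZR (floorR y)) by (apply IZR_le; lia).
  rewrite plus_IZR in Hz. lra.
Qed.

Lemma rsum1_ext n f g : (forall k, (1 <= k <= n)%nat -> f k = g k) -> rsum1 n f = rsum1 n g.
Proof.
  induction n as [|n IH]; intros H; simpl; auto.
  rewrite IH by (intros; apply H; lia). rewrite H by lia. auto.
Qed.

Lemma rsum1_single n m c : (1 <= m <= n)%nat ->
  rsum1 n (fun j => if Nat.eqb j m then c else 0) = c.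
Proof.
  induction n as [|n IH]; intros Hm; [lia|]. cbn [rsum1].
  destruct (Nat.eq_dec m (S n)) as [->|ne].
  - rewrite Nat.eqb_refl, (rsum1_ext n _ (fun _ => 0)).
    + clear; induction n; simpl; lra.
    + intros k Hk. destruct (Nat.eqb_spec k (S n)); [lia|auto].
  - rewrite IH by lia. destruct (Nat.eqb_spec (S n) m); [lia|lra].
Qed.

Lemma div_le_iff u P x : 0 < P -> (u / P <= x <-> u <= P * x).
Proof.
  intros HP; split; intros H.
  - apply Rmult_le_compat_l with (r := P) in H; [|lra]. field_simplify in H; lra.
  - replace x with ((P * x) / P) by (field; lra). unfold Rdiv. apply Rmult_le_compat_r; auto.
    left; apply Rinv_0_lt_compat; auto.
Qed.

(* The index j of the interval I_kj containing x in [0,1). *)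
Definition level_index (k : nat) (x : R) : nat := S (Z.to_nat (floorR (2 ^ (k - 1) * x))).

Lemma floorR_level_bounds k x : 0 <= x < 1 ->
  (0 <= floorR (2 ^ (k - 1) * x) < Z.of_nat (2 ^ (k - 1)))%Z.
Proof.
  intros Hx. pose proof (pow_lt 2 (k - 1) ltac:(lra)) as HP.
  split; [apply floorR_le_iff; simpl; nra|].
  apply lt_IZR. rewrite <- INR_IZR_INZ, pow_INR. pose proof (floorR_spec (2 ^ (k - 1) * x)).
  replace (INR 2) with 2 by (simpl; lra). nra.
Qed.

Lemma level_index_bounds k x : 0 <= x < 1 -> (1 <= level_index k x <= 2 ^ (k - 1))%nat.
Proof. intros Hx. pose proof (floorR_level_bounds k x Hx). unfold level_index. lia. Qed.

Lemma indI_level_index k j x : 0 <= x < 1 -> (1 <= j <= 2 ^ (k - 1))%nat ->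
  indI k j x = if Nat.eqb j (level_index k x) then 1 else 0.
Proof.
  intros Hx Hj. unfold indI, level_index. cbv zeta.
  set (P := 2 ^ (k - 1)). assert (HP : 0 < P) by (apply pow_lt; lra).
  pose proof (floorR_level_bounds k x Hx) as Hf. fold P in Hf.
  set (f := floorR (P * x)) in *.
  assert (Ea : (INR (j - 1) / P <= x) <-> (Z.of_nat (j - 1) <= f)%Z).
  { rewrite div_le_iff by auto. rewrite INR_IZR_INZ. apply floorR_le_iff. }
  assert (Eb : (x < INR j / P) <-> ~ (Z.of_nat j <= f)%Z).
  { unfold f. rewrite <- floorR_le_iff, <- INR_IZR_INZ, <- (div_le_iff _ P x HP). lra. }
  destruct (Nat.eqb_spec j (S (Z.to_nat f)));
  destruct (Nat.eqb_spec j (2 ^ (k - 1)));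
  destruct (Rle_dec (INR (j - 1) / P) x) as [r1|r1];
  try destruct (Rle_dec x 1);
  try destruct (Rlt_dec x (INR j / P)) as [r3|r3];
  try rewrite Ea in r1; try rewrite Eb in r3; try lra; lia.
Qed.

Definition rademacher_sign (x : R) (k : nat) : bool :=
  if Req_EM_T (rademacher k x) 1 then true else false.

Definition level_coord (x : R) (k : nat) : nat * nat := (k, level_index k x).

Lemma sign_rademacher x k w :
  sign (level_coord x) (rademacher_sign x) k w = rademacher k x * dcoord k (level_index k x) w.
Proof.
  assert (Hr : rademacher k x = 1 \/ rademacher k x = -1).
  { unfold rademacher. destruct (Rlt_dec x 1); [destruct (Z.even _)|]; auto. }
  unfold sign, sign_bit, rademacher_sign, level_coord, dcoord; simpl.
  destruct Hr as [E|E]; rewrite E;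
    destruct (Req_EM_T (-1) 1); destruct (Req_EM_T 1 1); try lra;
    destruct (w k (level_index k x)); simpl; lra.
Qed.

(* For x in [0,1) exactly one interval I_kj per level contains x, so Theta_n is
   the binary expansion with signs r_k(x) d_(k, j_k(x)). *)
Lemma Theta_partial_angle x w n : 0 <= x < 1 ->
  Theta n x w = partial_angle (level_coord x) (rademacher_sign x) n w.
Proof.
  intros Hx. unfold Theta, partial_angle. apply rsum1_ext. intros k Hk.
  rewrite sign_rademacher, <- theta_half_pow by lia.
  rewrite (rsum1_ext _ _ (fun j => if Nat.eqb j (level_index k x) then
      rademacher k x * dcoord k (level_index k x) w * theta k else 0)).
  - apply rsum1_single, level_index_bounds; auto.
  - intros j Hj. rewrite indI_level_index by (auto; lia).
    destruct (Nat.eqb_spec j (level_index k x)) as [->|]; lra.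
Qed.

Lemma limit_angle_close key1 sgn1 key2 sgn2 N w :
  (forall k, (1 <= k <= N)%nat -> key1 k = key2 k /\ sgn1 k = sgn2 k) ->
  Rabs (limit_angle key1 sgn1 w - limit_angle key2 sgn2 w) <= 2 * (/2) ^ N.
Proof.
  intros H.
  assert (E : partial_angle key1 sgn1 N w = partial_angle key2 sgn2 N w).
  { unfold partial_angle. apply rsum1_ext. intros k Hk. destruct (H k Hk) as [e1 e2].
    unfold sign, sign_bit. rewrite e1, e2. reflexivity. }
  pose proof (limit_angle_approx key1 sgn1 N w) as H1.
  pose proof (limit_angle_approx key2 sgn2 N w) as H2.
  rewrite E in H1. apply Rabs_le_between in H1, H2.
  apply Rabs_le; lra.
Qed.

Lemma floorR_pow2_mul_eq N k s t : (k <= N)%nat ->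
  floorR (2 ^ N * s) = floorR (2 ^ N * t) -> floorR (2 ^ k * s) = floorR (2 ^ k * t).
Proof.
  intros Hk Hst.
  assert (Hscale : forall z x, IZR z <= 2 ^ k * x <->
                    (z * 2 ^ Z.of_nat (N - k) <= floorR (2 ^ N * x))%Z).
  { intros z x. rewrite <- floorR_le_iff, mult_IZR, <- pow_IZR.
    assert (HP : 0 < 2 ^ (N - k)) by (apply pow_lt; lra).
    replace (2 ^ N * x) with (2 ^ k * x * 2 ^ (N - k))
      by (rewrite Rmult_assoc, (Rmult_comm x), <- Rmult_assoc, <- pow_add;
          f_equal; f_equal; lia).
    split; intros H; [apply Rmult_le_compat_r; lra|]. apply Rmult_le_reg_r in H; auto. }
  apply Z.le_antisymm; apply floorR_le_iff; [rewrite Hscale, <- Hst | rewrite Hscale, Hst];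
    apply Hscale; apply floorR_spec.
Qed.

Lemma nondyadic_floorR_lt t N : 0 < t < 1 -> ~ dyadic t -> IZR (floorR (2 ^ N * t)) < 2 ^ N * t.
Proof.
  intros Ht Hnd. pose proof (floorR_spec (2 ^ N * t)) as [[h1|h1] h2]; auto.
  exfalso. apply Hnd. split; [lra|].
  assert (Hp : (0 <= floorR (2 ^ N * t))%Z).
  { apply floorR_le_iff. pose proof (pow_lt 2 N ltac:(lra)). simpl. nra. }
  exists N, (Z.to_nat (floorR (2 ^ N * t))).
  rewrite INR_IZR_INZ, Z2Nat.id, h1 by auto. field. apply pow_nonzero; lra.
Qed.

(* A non-dyadic t lies strictly inside a dyadic cell of every level, so the
   cell of level N is a neighbourhood of t. *)
Lemma nondyadic_floorR_locally_constant t N : 0 < t < 1 -> ~ dyadic t ->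
  exists del, 0 < del /\ forall s, Rabs (s - t) < del ->
    0 <= s < 1 /\ floorR (2 ^ N * s) = floorR (2 ^ N * t).
Proof.
  intros Ht Hnd. set (P := 2 ^ N). assert (HP : 0 < P) by (apply pow_lt; lra).
  set (p := floorR (P * t)).
  pose proof (nondyadic_floorR_lt t N Ht Hnd) as h0. fold P p in h0.
  pose proof (floorR_spec (P * t)) as [_ h2]. fold p in h2.
  assert (Hp0 : 0 <= IZR p) by (apply IZR_le, floorR_le_iff; simpl; nra).
  assert (HpP : IZR p + 1 <= P).
  { unfold P; rewrite <- (Rmult_1_l (2 ^ N)), <- plus_IZR, pow_IZR, <- mult_IZR.
    apply IZR_le. assert (IZR p < IZR (1 * 2 ^ Z.of_nat N)).
    { rewrite mult_IZR, <- pow_IZR. fold P. nra. }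
    apply lt_IZR in H. lia. }
  exists (Rmin (t - IZR p / P) ((IZR p + 1) / P - t)). split.
  - apply Rmin_glb_lt; apply Rlt_0_minus; apply (Rmult_lt_reg_l P); auto;
      field_simplify; lra.
  - intros s Hs. apply Rabs_def2 in Hs.
    pose proof (Rmin_l (t - IZR p / P) ((IZR p + 1) / P - t)).
    pose proof (Rmin_r (t - IZR p / P) ((IZR p + 1) / P - t)).
    assert (Hsp : IZR p < P * s < IZR p + 1).
    { assert (IZR p / P < s < (IZR p + 1) / P) by lra.
      split; apply (Rmult_lt_reg_r (/ P)); try (apply Rinv_0_lt_compat; auto);
        replace (P * s * / P) with s by (field; lra); unfold Rdiv in *; lra. }
    split; [split; nra|]. apply floorR_unique. lra.
Qed.

Lemma level_data_eq s t N : 0 <= s < 1 -> 0 <= t < 1 ->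
  floorR (2 ^ N * s) = floorR (2 ^ N * t) ->
  forall k, (1 <= k <= N)%nat ->
    level_coord s k = level_coord t k /\ rademacher_sign s k = rademacher_sign t k.
Proof.
  intros Hs Ht Hst k Hk. unfold level_coord, rademacher_sign, level_index, rademacher.
  rewrite (floorR_pow2_mul_eq N (k - 1) s t) by (auto; lia).
  rewrite (floorR_pow2_mul_eq N k s t) by (auto; lia).
  destruct (Rlt_dec s 1), (Rlt_dec t 1); auto; lra.
Qed.

Definition angle_at (t : R) : Omega -> R := limit_angle (level_coord t) (rademacher_sign t).

Lemma angle_at_continuous t w : 0 < t < 1 -> ~ dyadic t -> forall d, 0 < d ->
  exists del, 0 < del /\ forall s, Rabs (s - t) < del ->
    0 <= s < 1 /\ Rabs (angle_at s w - angle_at t w) < d.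
Proof.
  intros Ht Hnd d Hd. destruct (half_pow_small (d / 2) ltac:(lra)) as [N HN].
  destruct (nondyadic_floorR_locally_constant t N Ht Hnd) as [del [Hdel H]].
  exists del; split; auto. intros s Hs. destruct (H s Hs) as [Hs01 Hst]. split; auto.
  pose proof (limit_angle_close _ _ _ _ N w (level_data_eq s t N Hs01 ltac:(lra) Hst)).
  unfold angle_at; lra.
Qed.

(** * Limit, derivative and direction of the curve *)

Lemma Un_cv_ext u v l : (forall n, u n = v n) -> Un_cv u l -> Un_cv v l.
Proof.
  intros H Hu eps He. destruct (Hu eps He) as [N HN]. exists N; intros n Hn. rewrite <- H; auto.
Qed.

Lemma Un_cv_const c : Un_cv (fun _ => c) c.
Proof. intros eps He; exists O; intros; unfold Rdist; rewrite Rminus_diag, Rabs_R0; lra. Qed.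

(* Since theta_k = 2^-k and sqrt (c_n / c_0) = 2^n sin 2^-n / sin 1 -> 1 / sin 1. *)
Lemma alpha_n_cv (al : cplx) x w : 0 <= x < 1 ->
  Un_cv (fun n => fst (alpha_n al n x w))
        (fst (cmul (cscale (/ sin 1) al) (cexpi (angle_at x w)))) /\
  Un_cv (fun n => snd (alpha_n al n x w))
        (snd (cmul (cscale (/ sin 1) al) (cexpi (angle_at x w)))).
Proof.
  intros Hx. set (Th := angle_at x w).
  set (Thn := fun n => partial_angle (level_coord x) (rademacher_sign x) n w).
  assert (Hs : Un_cv (fun n => 2 ^ n * sin ((/2) ^ n) * / sin 1) (1 * / sin 1)).
  { apply CV_mult; [apply two_pow_sin_half_pow_cv|apply Un_cv_const]. }
  assert (Hc : Un_cv (fun n => cos (Thn n)) (cos Th)).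
  { apply continuity_seq; [apply continuity_cos|apply limit_angle_cv]. }
  assert (Hsn : Un_cv (fun n => sin (Thn n)) (sin Th)).
  { apply continuity_seq; [apply continuity_sin|apply limit_angle_cv]. }
  assert (Hal : forall n, alpha_n al n x w =
     cmul (cscale (2 ^ n * sin ((/2) ^ n) * / sin 1) al) (cexpi (Thn n))).
  { intros n. unfold alpha_n, Thn. rewrite sqrt_cseq_ratio, Theta_partial_angle by auto.
    unfold cmul, cscale; simpl. f_equal; unfold Rdiv; ring. }
  split.
  - eapply Un_cv_ext; [intros n; rewrite Hal; reflexivity|].
    eapply Un_cv_ext with (u := fun n => 2 ^ n * sin ((/2) ^ n) * / sin 1 *
                                    (fst al * cos (Thn n) - snd al * sin (Thn n))).
    { intros n; unfold cmul, cscale, cexpi; simpl; ring. }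
    replace (fst (cmul (cscale (/ sin 1) al) (cexpi Th)))
      with (1 * / sin 1 * (fst al * cos Th - snd al * sin Th))
      by (unfold cmul, cscale, cexpi; simpl; ring).
    apply CV_mult; [exact Hs|apply CV_minus; apply CV_mult; auto; apply Un_cv_const].
  - eapply Un_cv_ext; [intros n; rewrite Hal; reflexivity|].
    eapply Un_cv_ext with (u := fun n => 2 ^ n * sin ((/2) ^ n) * / sin 1 *
                                    (fst al * sin (Thn n) + snd al * cos (Thn n))).
    { intros n; unfold cmul, cscale, cexpi; simpl; ring. }
    replace (snd (cmul (cscale (/ sin 1) al) (cexpi Th)))
      with (1 * / sin 1 * (fst al * sin Th + snd al * cos Th))
      by (unfold cmul, cscale, cexpi; simpl; ring).
    apply CV_mult; [exact Hs|apply CV_plus; apply CV_mult; auto; apply Un_cv_const].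
Qed.

Lemma RiemannInt_mean_bound g l u c e (pr : Riemann_integrable g l u) : l < u ->
  (forall x, l < x < u -> Rabs (g x - c) <= e) -> Rabs (RiemannInt pr / (u - l) - c) <= e.
Proof.
  intros Hlu Hg.
  pose proof (RiemannInt_const_bound (l := c - e) (u := c + e) pr ltac:(lra)) as B.
  specialize (B ltac:(intros x Hx; specialize (Hg x Hx); apply Rabs_le_between in Hg; lra)).
  apply Rabs_le. split.
  - apply (Rmult_le_reg_r (u - l)); [lra|]. field_simplify; lra.
  - apply (Rmult_le_reg_r (u - l)); [lra|]. field_simplify; lra.
Qed.

(* The fundamental theorem of calculus needs continuity of the integrand only
   at the point t. *)
Lemma derivable_pt_lim_integral (g F : R -> R) c t : 0 < t < 1 ->
  (forall s, 0 <= s <= 1 -> exists pr : Riemann_integrable g 0 s, F s = c + RiemannInt pr) ->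
  (forall eps, 0 < eps -> exists del, 0 < del /\
     forall s, Rabs (s - t) < del -> Rabs (g s - g t) <= eps) ->
  derivable_pt_lim F t (g t).
Proof.
  intros Ht HF Hg eps He.
  destruct (Hg (eps / 2) ltac:(lra)) as [del [Hd Hdel]].
  assert (Hp : 0 < Rmin del (Rmin t (1 - t))) by (repeat apply Rmin_glb_lt; lra).
  exists (mkposreal _ Hp). intros h Hh0 Hh. simpl in Hh.
  pose proof (Rmin_l del (Rmin t (1 - t))). pose proof (Rmin_r del (Rmin t (1 - t))).
  pose proof (Rmin_l t (1 - t)). pose proof (Rmin_r t (1 - t)).
  apply Rabs_def2 in Hh.
  destruct (HF t ltac:(lra)) as [prt Et]. destruct (HF (t + h) ltac:(lra)) as [prs Es].
  assert (Hnear : forall x, Rabs (x - t) < del -> Rabs (g x - g t) <= eps / 2) by auto.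
  rewrite Es, Et. apply Rle_lt_trans with (eps / 2); [|lra].
  destruct (Rlt_dec 0 h) as [hp|hn].
  - assert (pr : Riemann_integrable g t (t + h)) by (apply (RiemannInt_P23 prs); lra).
    pose proof (RiemannInt_P26 prt pr prs).
    replace (c + RiemannInt prs - (c + RiemannInt prt)) with (RiemannInt pr) by lra.
    replace h with (t + h - t) at 2 by ring.
    apply RiemannInt_mean_bound; [lra|]. intros x Hx; apply Hnear, Rabs_def1; lra.
  - assert (pr : Riemann_integrable g (t + h) t) by (apply (RiemannInt_P23 prt); lra).
    rewrite <- (RiemannInt_P26 prs pr prt).
    replace ((c + RiemannInt prs - (c + (RiemannInt prs + RiemannInt pr))) / h)
      with (RiemannInt pr / (t - (t + h))) by (field; lra).
    apply RiemannInt_mean_bound; [lra|]. intros x Hx; apply Hnear, Rabs_def1; lra.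
Qed.

Lemma has_deriv_unique g t v v' : has_deriv g t v -> has_deriv g t v' -> v = v'.
Proof.
  intros [D1 D2] [D1' D2'].
  apply injective_projections; eapply uniqueness_limite; eauto.
Qed.

Lemma cmul_cexpi_continuous z T eps : 0 < eps -> exists del, 0 < del /\
  forall S, Rabs (S - T) < del ->
    Rabs (fst (cmul z (cexpi S)) - fst (cmul z (cexpi T))) <= eps /\
    Rabs (snd (cmul z (cexpi S)) - snd (cmul z (cexpi T))) <= eps.
Proof.
  intros He.
  assert (Hcont : forall u, continuity u -> exists del, 0 < del /\
            forall S, Rabs (S - T) < del -> Rabs (u S - u T) <= eps).
  { intros u Hu. destruct (Hu T eps He) as [del [Hd H]]. exists del; split; auto.
    intros S HS. destruct (Req_dec S T) as [->|ne].
    - rewrite Rminus_diag, Rabs_R0; lra.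
    - left; apply (H S). split; [split; [exact I|auto]|exact HS]. }
  destruct (Hcont (fun S => fst (cmul z (cexpi S)))) as [d1 [Hd1 H1]].
  { unfold cmul, cexpi; simpl. reg. }
  destruct (Hcont (fun S => snd (cmul z (cexpi S)))) as [d2 [Hd2 H2]].
  { unfold cmul, cexpi; simpl. reg. }
  exists (Rmin d1 d2); split; [apply Rmin_glb_lt; auto|].
  intros S HS. pose proof (Rmin_l d1 d2); pose proof (Rmin_r d1 d2).
  split; [apply H1|apply H2]; lra.
Qed.

Definition unit_cplx (z : cplx) : Prop := fst z ^ 2 + snd z ^ 2 = 1.

Lemma unit_cplx_normalize z r : cnorm z = r -> 0 < r -> unit_cplx (cscale (/ r) z).
Proof.
  unfold cnorm, unit_cplx, cscale; cbn [fst snd]. intros Hz Hr.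
  assert (E : fst z ^ 2 + snd z ^ 2 = r ^ 2).
  { rewrite <- Hz, pow2_sqrt; auto. apply Rplus_le_le_0_compat; apply pow2_ge_0. }
  replace ((/ r * fst z) ^ 2 + (/ r * snd z) ^ 2) with ((fst z ^ 2 + snd z ^ 2) / r ^ 2)
    by (field; lra).
  rewrite E. field. lra.
Qed.

(* Multiplication by a unit z is a rotation, and sin is injective on [-1, 1]. *)
Lemma cmul_cexpi_inj z th1 th2 : unit_cplx z -> -1 <= th1 <= 1 -> -1 <= th2 <= 1 ->
  cmul z (cexpi th1) = cmul z (cexpi th2) -> th1 = th2.
Proof.
  unfold unit_cplx, cmul, cexpi; destruct z as [z1 z2]; cbn [fst snd].
  intros Hz H1 H2 E. injection E as E1 E2.
  assert (Hs : sin th1 = sin th2).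
  { assert (A : z1 * (sin th1 - sin th2) + z2 * (cos th1 - cos th2) = 0) by lra.
    assert (B : z1 * (cos th1 - cos th2) - z2 * (sin th1 - sin th2) = 0) by lra.
    assert (C : (z1 ^ 2 + z2 ^ 2) * (sin th1 - sin th2) =
                z1 * (z1 * (sin th1 - sin th2) + z2 * (cos th1 - cos th2))
                - z2 * (z1 * (cos th1 - cos th2) - z2 * (sin th1 - sin th2))) by ring.
    rewrite Hz, A, B in C. lra. }
  pose proof PI2_1.
  rewrite <- (asin_sin th1), <- (asin_sin th2) by lra. rewrite Hs; auto.
Qed.

Lemma in_arc_bounds z th1 th2 cl1 cl2 T : unit_cplx z -> -1 <= T <= 1 ->
  -1 <= th1 -> th2 <= 1 -> in_arc z th1 th2 cl1 cl2 (cmul z (cexpi T)) -> th1 <= T <= th2.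
Proof.
  intros Hz HT H1 H2 [th [h1 [h2 E]]].
  assert (-1 <= th <= 1) by (destruct cl1, cl2; lra).
  rewrite (cmul_cexpi_inj z T th Hz HT H E). destruct cl1, cl2; lra.
Qed.

Lemma in_arc_interior z th1 th2 cl1 cl2 T : th1 < T < th2 ->
  in_arc z th1 th2 cl1 cl2 (cmul z (cexpi T)).
Proof. intros HT. exists T. destruct cl1, cl2; repeat split; lra. Qed.

Lemma nondyadic_interior t : 0 <= t <= 1 -> ~ dyadic t -> 0 < t < 1.
Proof.
  intros Ht Hnd.
  assert (t <> 0) by (intros ->; apply Hnd; split; [lra|]; exists O, O; simpl; field).
  assert (t <> 1) by (intros ->; apply Hnd; split; [lra|]; exists O, 1%nat; simpl; field).
  lra.
Qed.

Section RandomCurve.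
Variables a b : cplx.
Hypothesis Hab : cnorm (csub b a) = sin 1.
Variable alpha : R -> Omega -> cplx.
Hypothesis Halpha : forall t w, 0 <= t <= 1 ->
  Un_cv (fun n => fst (alpha_n (csub b a) n t w)) (fst (alpha t w)) /\
  Un_cv (fun n => snd (alpha_n (csub b a) n t w)) (snd (alpha t w)).
Variable f : R -> Omega -> cplx.
Hypothesis Hf : forall t w, 0 <= t <= 1 ->
  exists (pr1 : Riemann_integrable (fun s => fst (alpha s w)) 0 t)
         (pr2 : Riemann_integrable (fun s => snd (alpha s w)) 0 t),
    f t w = (fst a + RiemannInt pr1, snd a + RiemannInt pr2).

Let z0 := cscale (/ sin 1) (csub b a).

Lemma alpha_eq x w : 0 <= x < 1 -> alpha x w = cmul z0 (cexpi (angle_at x w)).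
Proof.
  intros Hx. destruct (Halpha x w ltac:(lra)) as [H1 H2].
  destruct (alpha_n_cv (csub b a) x w Hx) as [E1 E2].
  apply injective_projections; eapply UL_sequence; eauto.
Qed.

Lemma f_has_deriv t w : 0 < t < 1 -> ~ dyadic t -> has_deriv (fun s => f s w) t (alpha t w).
Proof.
  intros Ht Hnd.
  assert (Hcont : forall eps, 0 < eps -> exists del, 0 < del /\ forall s, Rabs (s - t) < del ->
            Rabs (fst (alpha s w) - fst (alpha t w)) <= eps /\
            Rabs (snd (alpha s w) - snd (alpha t w)) <= eps).
  { intros eps He. destruct (cmul_cexpi_continuous z0 (angle_at t w) eps He) as [d [Hd Hz]].
    destruct (angle_at_continuous t w Ht Hnd d Hd) as [del [Hdel H]].
    exists del; split; auto. intros s Hs. destruct (H s Hs) as [Hs01 Hclose].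
    rewrite (alpha_eq s w Hs01), (alpha_eq t w) by lra. auto. }
  split.
  - apply (derivable_pt_lim_integral (fun s => fst (alpha s w)) _ (fst a) t Ht).
    + intros s Hs. destruct (Hf s w Hs) as [pr1 [pr2 E]]. exists pr1. rewrite E; reflexivity.
    + intros eps He. destruct (Hcont eps He) as [del [Hdel H]].
      exists del; split; auto. intros s Hs; apply H; auto.
  - apply (derivable_pt_lim_integral (fun s => snd (alpha s w)) _ (snd a) t Ht).
    + intros s Hs. destruct (Hf s w Hs) as [pr1 [pr2 E]]. exists pr2. rewrite E; reflexivity.
    + intros eps He. destruct (Hcont eps He) as [del [Hdel H]].
      exists del; split; auto. intros s Hs; apply H; auto.
Qed.

Lemma arc_event_bounds t w th1 th2 cl1 cl2 : 0 < t < 1 -> ~ dyadic t ->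
  -1 <= th1 -> th2 <= 1 ->
  (exists v, has_deriv (fun s => f s w) t v /\ in_arc z0 th1 th2 cl1 cl2 v) ->
  th1 <= angle_at t w <= th2.
Proof.
  intros Ht Hnd H1 H2 [v [Hv Harc]].
  rewrite (has_deriv_unique _ _ _ _ Hv (f_has_deriv t w Ht Hnd)), alpha_eq in Harc by lra.
  apply (in_arc_bounds z0 th1 th2 cl1 cl2); auto.
  - apply unit_cplx_normalize; [exact Hab|apply sin1_gt0].
  - apply limit_angle_bound.
Qed.

Lemma arc_event_compl t w th1 th2 cl1 cl2 : 0 < t < 1 -> ~ dyadic t ->
  ~ (exists v, has_deriv (fun s => f s w) t v /\ in_arc z0 th1 th2 cl1 cl2 v) ->
  angle_at t w <= th1 \/ th2 <= angle_at t w.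
Proof.
  intros Ht Hnd HnA.
  destruct (Rle_dec (angle_at t w) th1); [left; auto|].
  destruct (Rle_dec th2 (angle_at t w)); [right; auto|].
  exfalso; apply HnA. exists (alpha t w). split; [apply f_has_deriv; auto|].
  rewrite alpha_eq by lra. apply in_arc_interior; lra.
Qed.

End RandomCurve.

Theorem mainTheorem9
  (a b : cplx) (Hab : cnorm (csub b a) = sin 1)
  (alpha : R -> Omega -> cplx)
  (Halpha : forall t w, 0 <= t <= 1 ->
     Un_cv (fun n => fst (alpha_n (csub b a) n t w)) (fst (alpha t w)) /\
     Un_cv (fun n => snd (alpha_n (csub b a) n t w)) (snd (alpha t w)))
  (f : R -> Omega -> cplx)
  (Hf : forall t w, 0 <= t <= 1 ->
     exists (pr1 : Riemann_integrable (fun s => fst (alpha s w)) 0 t)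
            (pr2 : Riemann_integrable (fun s => snd (alpha s w)) 0 t),
       f t w = (fst a + RiemannInt pr1, snd a + RiemannInt pr2)) :
  forall t, 0 <= t <= 1 -> ~ dyadic t ->
    (forall w, exists v, has_deriv (fun s => f s w) t v) /\
    (forall (th1 th2 : R) (cl1 cl2 : bool), -1 <= th1 <= th2 -> th2 <= 1 ->
       prob_is
         (fun w => exists v, has_deriv (fun s => f s w) t v /\
                     in_arc (cscale (/ cnorm (csub b a)) (csub b a)) th1 th2 cl1 cl2 v)
         ((th2 - th1) / 2)).
Proof.
  intros t Ht Hnd. apply nondyadic_interior in Ht as Ht'; auto.
  split.
  - intros w. exists (alpha t w). apply (f_has_deriv a b alpha Halpha f Hf); auto.
  - intros th1 th2 cl1 cl2 Hth Hth2. rewrite Hab.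
    apply (prob_limit_angle_interval (level_coord t) (fun k => eq_refl) (rademacher_sign t));
      try lra.
    + intros w. apply (arc_event_bounds a b Hab alpha Halpha f Hf); auto; lra.
    + intros w. apply (arc_event_compl a b alpha Halpha f Hf); auto.
Qed.
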